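(* The following hold. (1) If $G$ is a finite elementary abelian $2$-group, then $\Gamma^+_{G,H}$ admits a perfect code for every subgroup $H$ of $G$. (2) If $G$ is a finite abelian group of odd order, then $\Gamma^+_{G,H}$ admits a perfect code if and only if $H\in\{\{0\},G\}$. (3) If $n$ is an even positive integer and $H\le\mathbb{Z}_n$, then $\Gamma^+_{\mathbb{Z}_n,H}$ admits a perfect code if and only if $H\in\{\mathbb{Z}_n,\{0\},\langle 2\rangle\}$. (4) If $G=\mathbb{Z}_4^n$ for some $n\ge1$ and $H\le G$, then $\Gamma^+_{G,H}$ admits a perfect code if and only if $H\in\{\{0\},G\}$ or $H$ contains all involutions of $G$.
   Context: Abelian groups are written additively with identity $0$. For a subgroup $H$ of a finite abelian group $G$, the extended subgroup sum graph $\Gamma^+_{G,H}$ is the simple undirected graph with vertex set $G$ in which distinct vertices $x,y$ are adjacent if and only if $x+y\in H$. A perfect code in a graph is a set $C$ of vertices that is independent and such that every vertex not in $C$ is adjacent to exactly one vertex of $C$. An involution is an element of order exactly $2$. *)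

From mathcomp Require Import all_boot all_order all_algebra.
Set Implicit Arguments. Unset Strict Implicit. Unset Printing Implicit Defensive.
Import GRing.Theory.
Local Open Scope ring_scope.

(* Finite abelian groups are finite Z-modules (additive notation). *)

Definition is_subgroup (G : finZmodType) (H : {set G}) : Prop :=
  0 \in H /\ (forall x y, x \in H -> y \in H -> x - y \in H).

Definition sum_adj (G : finZmodType) (H : {set G}) (x y : G) : bool :=
  (x != y) && (x + y \in H).

Definition perfect_code (G : finZmodType) (H : {set G}) (C : {set G}) : Prop :=
  (forall x y, x \in C -> y \in C -> ~~ sum_adj H x y) /\
  (forall x, x \notin C -> #|[set c in C | sum_adj H x c]| = 1%N).

Definition has_perfect_code (G : finZmodType) (H : {set G}) : Prop :=
  exists C : {set G}, perfect_code H C.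

Definition cyc (G : finZmodType) (g : G) : {set G} :=
  [set g *+ (nat_of_ord k) | k : 'I_#|G|].

Definition involution (G : finZmodType) (x : G) : Prop := x != 0 /\ x + x = 0.

From mathcomp Require Import all_boot all_order all_algebra.
From mathcomp Require Import fingroup cyclic.
Import GRing.Theory.
Local Open Scope ring_scope.

(* All four parts follow from one characterisation: for a subgroup H of a
   finite abelian group G, Gamma^+_{G,H} has a perfect code iff H = {0} or H
   contains every double a + a.  In both cases adjacency is "distinct and
   equivalent" for an equivalence relation (y = +-x, resp. x - y in H), so a
   set of class representatives is a perfect code.  Conversely, if H contains
   some h <> 0 and a perfect code C, then every c in C satisfies c + c in H:
   otherwise -c and c + h would both be code neighbours of -c, or c + h would
   be a non-code vertex whose code neighbour is forced to be c.  The doubles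
   of G then lie in H because every vertex is in C or adjacent to C.  For the
   particular groups it remains to describe the subgroups containing 2G. *)

Section PerfectCodeFromEquivalence.
Variables (G : finZmodType) (H : {set G}) (E : rel G).
Hypotheses (E_refl : reflexive E) (E_trans : left_transitive E).
Hypothesis sum_memE : forall x y, x != y -> (x + y \in H) = E x y.

Let rep (x : G) : G := odflt x [pick y | E x y].

Let E_rep x : E x (rep x).
Proof. by rewrite /rep; case: pickP => [y //|/(_ x)]; rewrite E_refl. Qed.

Let rep_eq {x y} : E x y -> rep x = rep y.
Proof.
move=> Exy; rewrite /rep (eq_pick (E_trans _ _ Exy)).
by case: pickP => // /(_ y); rewrite E_refl.
Qed.

Lemma perfect_code_of_equivalence : has_perfect_code H.
Proof.
pose C := [set x | rep x == x].
have repC x : rep (rep x) = rep x by rewrite -(rep_eq (E_rep x)).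
exists C; split.
  move=> x y; rewrite !inE /sum_adj => /eqP repx /eqP repy.
  apply/negP => /andP [neq_xy]; rewrite sum_memE // => /rep_eq.
  by rewrite repx repy => eq_xy; rewrite eq_xy eqxx in neq_xy.
move=> x; rewrite inE => rep_neq; apply/eqP/cards1P; exists (rep x).
apply/setP => c; rewrite !inE /sum_adj.
apply/and3P/eqP => [[/eqP repc neq_xc]|->].
  by rewrite sum_memE // => /rep_eq ->.
by rewrite repC eq_sym rep_neq sum_memE ?E_rep // eq_sym.
Qed.

End PerfectCodeFromEquivalence.

Section SubgroupSumGraph.
Context {G : finZmodType} {H : {set G}}.
Hypothesis H_sub : is_subgroup H.

Lemma mem0H : 0 \in H. Proof. by case: H_sub. Qed.

Lemma memBH {x y} : x \in H -> y \in H -> x - y \in H.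
Proof. by case: H_sub => _; apply. Qed.

Lemma memNH {x} : x \in H -> - x \in H.
Proof. by move=> Hx; rewrite -sub0r memBH // mem0H. Qed.

Lemma memDH {x y} : x \in H -> y \in H -> x + y \in H.
Proof. by move=> Hx Hy; rewrite -(opprK y) memBH // memNH. Qed.

Lemma memMnH {x} k : x \in H -> x *+ k \in H.
Proof. by move=> Hx; elim: k => [|k IHk]; rewrite ?mulr0n ?mem0H // mulrS memDH. Qed.

Lemma has_perfect_code_doubles : (forall a, a + a \in H) -> has_perfect_code H.
Proof.
move=> H2; apply: (@perfect_code_of_equivalence _ _ (fun x y => x - y \in H)).
- by move=> x; rewrite subrr mem0H.
- move=> x y Hxy z; apply/idP/idP => [Hxz|Hyz].
    by have := memBH Hxz Hxy; rewrite opprB addrC addrA subrK.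
  by have := memDH Hxy Hyz; rewrite addrA subrK.
move=> x y _; apply/idP/idP => Hxy.
  by have := memBH Hxy (H2 y); rewrite opprD addrA addrK.
by have := memDH Hxy (H2 y); rewrite addrA subrK.
Qed.

Section PerfectCode.
Variable C : {set G}.
Hypothesis C_perfect : perfect_code H C.

Lemma perfect_code_neighbor {x} : x \notin C -> exists2 c, c \in C & sum_adj H x c.
Proof.
case: C_perfect => _ /(_ x) one_nbr /one_nbr/eqP/cards1P [c].
by move/setP/(_ c); rewrite !inE eqxx => /andP [Cc adj]; exists c.
Qed.

Lemma perfect_code_neighbor_uniq {x c1 c2} : x \notin C ->
  c1 \in C -> c2 \in C -> sum_adj H x c1 -> sum_adj H x c2 -> c1 = c2.
Proof.
case: C_perfect => _ /(_ x) one_nbr /one_nbr/eqP/cards1P [c nbrs] *.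
suff /andP [/eqP -> /eqP ->] : (c1 == c) && (c2 == c) by [].
by rewrite -!in_set1 -nbrs !inE; apply/andP; split; apply/andP.
Qed.

Lemma perfect_code_double_mem {c h} : h \in H -> h != 0 -> c \in C -> c + c \in H.
Proof.
move=> Hh h_neq0 Cc; apply/negPn/negP => Hcc.
have c_neqN : c != - c by apply: contraNneq Hcc => {2}->; rewrite subrr mem0H.
case: (boolP (c + h \in C)) => [Cch|Cch].
  have CNc : - c \notin C.
    apply/negP => CNc; case: C_perfect => /(_ c (- c) Cc CNc).
    by rewrite /sum_adj c_neqN subrr mem0H.
  have c_eq : c = c + h.
    apply: (perfect_code_neighbor_uniq CNc) => //; rewrite /sum_adj.
      by rewrite eq_sym c_neqN addNr mem0H.
    rewrite addKr Hh andbT; apply: contraNneq Hcc => Nc.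
    by rewrite -(addrK h (c + c)) -[c + c + h]addrA -Nc subrr sub0r memNH.
  by case/eqP: h_neq0; apply: (@addrI _ c); rewrite addr0 -c_eq.
have [c' Cc' /andP [_ Hchc']] := perfect_code_neighbor Cch.
have Hcc' : c + c' \in H by have := memBH Hchc' Hh; rewrite addrAC addrK.
case: C_perfect => /(_ c c' Cc Cc'); rewrite /sum_adj Hcc' andbT negbK.
by move=> /eqP c_eq; case/negP: Hcc; rewrite {2}c_eq.
Qed.

Lemma perfect_code_doubles : H != [set 0] -> forall a, a + a \in H.
Proof.
move=> H_neq0 a.
have [h Hh h_neq0] : exists2 h, h \in H & h != 0.
  apply/exists_inP; apply: contraNT H_neq0 => /exists_inPn H0.
  apply/eqP/setP => x; rewrite inE; apply/idP/eqP => [/H0/negbNE/eqP //|->].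
  exact: mem0H.
case: (boolP (a \in C)) => [Ca|Ca]; first exact: perfect_code_double_mem Hh h_neq0 Ca.
have [c Cc /andP [_ Hac]] := perfect_code_neighbor Ca.
have Hcc := perfect_code_double_mem Hh h_neq0 Cc.
by have := memBH (memDH Hac Hac) Hcc; rewrite addrACA addrK.
Qed.

End PerfectCode.

Lemma has_perfect_codeP :
  has_perfect_code H <-> H = [set 0] \/ forall a, a + a \in H.
Proof.
split=> [[C C_perfect]|[->|]]; last exact: has_perfect_code_doubles.
  have [|H_neq0] := eqVneq H [set 0]; first by left.
  by right; apply: perfect_code_doubles C_perfect H_neq0.
apply: (@perfect_code_of_equivalence _ _ (fun x y => (y == x) || (y == - x))).
- by move=> x; rewrite eqxx.
- move=> x y /orP [/eqP ->|/eqP ->] z //.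
  by rewrite opprK orbC.
by move=> x y neq_xy; rewrite inE addrC addr_eq0 [y == x]eq_sym (negPf neq_xy).
Qed.

End SubgroupSumGraph.

Lemma mulrn_card {G : finZmodType} (x : G) : x *+ #|G| = 0.
Proof. by rewrite -FinRing.zmodXgE -cardsT expg_cardG ?inE. Qed.

Lemma odd_card_double_inj {G : finZmodType} : odd #|G| ->
  injective (fun x : G => x + x).
Proof.
move=> odd_G x y /eqP; rewrite -subr_eq0 opprD addrACA -mulr2n => /eqP x2.
apply/eqP; rewrite -subr_eq0; apply/eqP.
have := mulrn_card (x - y : G).
rewrite -(odd_double_half #|G|) odd_G -muln2 mulnC mulrnDr mulrnA x2.
by rewrite mul0rn addr0 mulr1n.
Qed.

Lemma odd_card_doubles_sub (G : finZmodType) (H : {set G}) : odd #|G| ->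
  (forall a, a + a \in H) -> H = [set: G].
Proof.
move=> odd_G H2; apply/eqP; rewrite eqEcard subsetT /=.
rewrite -(card_imset [set: G] (odd_card_double_inj odd_G)) subset_leq_card //.
by apply/subsetP => _ /imsetP [a _ ->].
Qed.

Lemma Zp_double_cyc m (a : 'Z_m.+2) : a + a \in cyc (2%:R : 'Z_m.+2).
Proof.
apply/imsetP; have a_lt : (a < #|'Z_m.+2|)%N by rewrite card_ord.
by exists (Ordinal a_lt); rewrite // -mulrnA mulnC mulrnA natr_Zp mulr2n.
Qed.

Lemma Zp_doubles_sub {m} {H : {set 'Z_m.+2}} : is_subgroup H ->
  (forall a, a + a \in H) <-> H = [set: 'Z_m.+2] \/ H = cyc (2%:R : 'Z_m.+2).
Proof.
move=> H_sub; split=> [H2|[->|->] a]; rewrite ?inE ?Zp_double_cyc //.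
have halfE (x : 'Z_m.+2) : x = (x./2)%:R + (x./2)%:R + (odd x)%:R.
  by rewrite -{1}(natr_Zp x) -{1}(odd_double_half x) -addnn !natrD addrC.
have [H1|H1] := boolP (1 \in H).
  by left; apply/setP => x; rewrite inE -(natr_Zp x) memMnH.
right; apply/eqP; rewrite eqEsubset; apply/andP; split; apply/subsetP => x.
  move=> Hx; rewrite (halfE x); case: (boolP (odd x)) => [odd_x|_].
    case/negP: H1; have := memBH H_sub Hx (H2 (x./2)%:R).
    by rewrite {1}(halfE x) odd_x addrAC subrr add0r.
  by rewrite addr0 Zp_double_cyc.
by case/imsetP => k _ ->; rewrite -mulrnA mulnC mulrnA mulr2n H2.
Qed.

Lemma Z4_order2_double (z : 'Z_4) : z + z = 0 -> z = (z != 0)%:R + (z != 0)%:R.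
Proof. by case: z => [[|[|[|[|k]]]] ?] // /(congr1 val) // _; apply/val_inj. Qed.

Lemma Z4_quadruple (z : 'Z_4) : z + z + (z + z) = 0.
Proof. by case: z => [[|[|[|[|k]]]] ?] //; apply/val_inj. Qed.

Lemma Z4rV_doubles_sub {n} {H : {set 'rV['Z_4]_n}} : is_subgroup H ->
  (forall a, a + a \in H) <-> forall x, involution x -> x \in H.
Proof.
move=> H_sub; split=> [H2 x [_ x2]|Hinv a].
  suff -> : x = let a := \row_i (x 0 i != 0)%:R in a + a by apply: H2.
  apply/rowP => i; rewrite !mxE; apply: Z4_order2_double.
  by have := congr1 (fun y : 'rV_n => y 0 i) x2; rewrite /= !mxE.
have [->|a2_neq0] := eqVneq (a + a) 0; first exact: mem0H.
by apply: Hinv; split; last by apply/rowP => i; rewrite !mxE Z4_quadruple.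
Qed.

Theorem corollary6p2 :
  (forall (G : finZmodType), (forall x : G, x + x = 0) ->
     forall H : {set G}, is_subgroup H -> has_perfect_code H) /\
  (forall (G : finZmodType), odd #|G| ->
     forall H : {set G}, is_subgroup H ->
       (has_perfect_code H <-> H = [set 0] \/ H = [set: G])) /\
  (forall n : nat, (0 < n)%N -> ~~ odd n ->
     forall H : {set 'Z_n}, is_subgroup H ->
       (has_perfect_code H <->
          H = [set: 'Z_n] \/ H = [set 0] \/ H = cyc (2%:R : 'Z_n))) /\
  (forall n : nat, (1 <= n)%N ->
     forall H : {set 'rV['Z_4]_n}, is_subgroup H ->
       (has_perfect_code H <->
          H = [set 0] \/ H = [set: 'rV['Z_4]_n] \/
          (forall x : 'rV['Z_4]_n, involution x -> x \in H))).
Proof.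
split=> [G G2 H H_sub|].
  by apply/(has_perfect_codeP H_sub); right=> a; rewrite G2 (mem0H H_sub).
split=> [G odd_G H H_sub|].
  have := has_perfect_codeP H_sub; have := @odd_card_doubles_sub _ H odd_G.
  have : H = [set: G] -> forall a, a + a \in H by move=> -> a; rewrite inE.
  tauto.
split=> [[|[|m]] // _ _ H H_sub|n _ H H_sub].
  by have := has_perfect_codeP H_sub; have := Zp_doubles_sub H_sub; tauto.
have := has_perfect_codeP H_sub; have := Z4rV_doubles_sub H_sub.
have : H = [set: _] -> forall x, involution x -> x \in H by move=> -> x; rewrite inE.
tauto.
Qed.
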